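(* Let $\mathbb{K}$ be a field of characteristic zero, let $p,q\in\mathbb{Z}^n_{\ge0}$ be nonzero vectors and let $\beta,\gamma\in\mathbb{K}^n$ be non-proportional vectors. If the derivations $\Delta^p_\beta$ and $\Delta^q_\gamma$ of $\mathbb{K}[x_1,\ldots,x_n]$ generate a finite dimensional Lie algebra, then there exists $r\in\mathbb{Z}_{\ge0}$ such that $\langle\beta,rp+q\rangle=0$.
   Context: For $p\in\mathbb{Z}^n_{\ge0}$ and $\beta\in\mathbb{K}^n$, $\Delta^p_\beta:=x_1^{p_1}\cdots x_n^{p_n}\sum_{j=1}^n\beta_jx_j\partial_j$, where $\partial_j=\partial/\partial x_j$. $\langle\beta,u\rangle:=\sum_i\beta_iu_i$. The Lie bracket is the commutator of derivations. *)

From HB Require Import structures.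
From mathcomp Require Import all_boot all_order all_algebra.
From mathcomp Require Import mpoly.
Set Implicit Arguments. Unset Strict Implicit. Unset Printing Implicit Defensive.
Import GRing.Theory.
Local Open Scope ring_scope.

Definition op (K : fieldType) (n : nat) := {mpoly K[n]} -> {mpoly K[n]}.

Definition Delta (K : fieldType) (n : nat) (p : 'X_{1..n}) (beta : 'I_n -> K)
  : op K n :=
  fun f => 'X_[p] * \sum_(j < n) (beta j *: ('X_j * f^`M(j))).

Definition lie_br (K : fieldType) (n : nat) (D E : op K n) : op K n :=
  fun f => D (E f) - E (D f).

(* Iterated brackets of D1 and D2; the Lie algebra generated by D1, D2 is
   the K-linear span of these. *)
Inductive lie_word (K : fieldType) (n : nat) (D1 D2 : op K n) : op K n -> Prop :=
| lw_left : lie_word D1 D2 D1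
| lw_right : lie_word D1 D2 D2
| lw_br : forall A B, lie_word D1 D2 A -> lie_word D1 D2 B ->
          lie_word D1 D2 (lie_br A B).

Definition gen_lie_fin_dim (K : fieldType) (n : nat) (D1 D2 : op K n) : Prop :=
  exists (s : seq (op K n)), forall A, lie_word D1 D2 A ->
    exists c : nat -> K, forall f, A f = \sum_(i < size s) c i *: (nth id s i) f.

Definition non_proportional (K : fieldType) (n : nat) (beta gamma : 'I_n -> K) :=
  forall a b : K, (forall j, a * beta j + b * gamma j = 0) -> a = 0 /\ b = 0.

Definition pairing (K : fieldType) (n : nat) (beta : 'I_n -> K) (u : 'I_n -> nat) : K :=
  \sum_(i < n) beta i * (u i)%:R.

(* The iterated brackets A_k = ad(Delta^p_beta)^k Delta^q_gamma are weighted
   shifts x^u |-> <d_k, u> x^(u + kp + q), whose weights have the form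
   d_k = (prod_(i<k) <beta, ip + q>) gamma + b_k beta.  If no <beta, rp + q> with
   r <= N vanishes, non-proportionality yields indices j_k with d_k(j_k) <> 0 for
   k <= N, and the coefficient of x^(e_(j_l) + lp + q) in A_k x_(j_l) vanishes
   unless k = l.  Hence A_0, ..., A_N are linearly independent, so they cannot
   lie in the span of N operators.  Neither the characteristic of K nor q <> 0
   plays a role. *)

From HB Require Import structures.
From mathcomp Require Import all_boot all_order all_algebra.
From mathcomp Require Import mpoly.
From mathcomp Require Import ring.
Set Implicit Arguments. Unset Strict Implicit.
Import GRing.Theory.
Local Open Scope ring_scope.

Section WeightedShifts.
Variables (K : fieldType) (n : nat).

Lemma pairingD (d : 'I_n -> K) (u v : 'X_{1..n}) :
  pairing d (u + v)%MM = pairing d u + pairing d v.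
Proof.
by rewrite /pairing -big_split; apply: eq_bigr => i _; rewrite mnmDE natrD mulrDr.
Qed.

Lemma pairing_mnm1 (d : 'I_n -> K) (j : 'I_n) : pairing d U_(j)%MM = d j.
Proof.
rewrite /pairing (bigD1 j) //= mnm1E eqxx mulr1 big1 ?addr0 // => i ne_ij.
by rewrite mnm1E eq_sym (negbTE ne_ij) mulr0.
Qed.

Lemma mulX_mderivX (j : 'I_n) (u : 'X_{1..n}) :
  'X_j * ('X_[u] : {mpoly K[n]})^`M(j) = (u j)%:R *: 'X_[u].
Proof.
rewrite mderivX -scalerAr -mpolyXD.
have [->|uj_neq0] := eqVneq (u j) 0%N; first by rewrite !scale0r.
congr (_ *: 'X_[_]); rewrite addmC submK //; apply/mnm_lepP => l; rewrite mnm1E.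
by case: (j =P l) uj_neq0 => // ->; rewrite -lt0n.
Qed.

Definition weighted_shift (D : op K n) (d : 'I_n -> K) (m : 'X_{1..n}) :=
  forall c u, D (c *: 'X_[u]) = (c * pairing d u) *: 'X_[u + m].

Lemma Delta_weighted_shift (p : 'X_{1..n}) (beta : 'I_n -> K) :
  weighted_shift (Delta p beta) beta p.
Proof.
move=> c u; rewrite /Delta.
under eq_bigr => j _ do rewrite mderivZ -scalerAr mulX_mderivX !scalerA.
rewrite -scaler_suml -scalerAr -mpolyXD addmC; congr (_ *: _).
by rewrite /pairing mulr_sumr; apply: eq_bigr => i _; rewrite mulrCA mulrA.
Qed.

Definition br_weight (d1 : 'I_n -> K) (m1 : 'X_{1..n}) d2 (m2 : 'X_{1..n}) :=
  fun j => pairing d1 m2 * d2 j - pairing d2 m1 * d1 j.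

Lemma pairing_br_weight d1 m1 d2 m2 u :
  pairing (br_weight d1 m1 d2 m2) u
  = pairing d1 m2 * pairing d2 u - pairing d2 m1 * pairing d1 u.
Proof.
by rewrite /pairing !mulr_sumr -sumrB; apply: eq_bigr => i _; rewrite mulrBl !mulrA.
Qed.

Lemma weighted_shift_lie_br D1 D2 d1 d2 m1 m2 :
  weighted_shift D1 d1 m1 -> weighted_shift D2 d2 m2 ->
  weighted_shift (lie_br D1 D2) (br_weight d1 m1 d2 m2) (m1 + m2).
Proof.
move=> shD1 shD2 c u; rewrite /lie_br shD2 shD1 shD1 shD2.
rewrite -addmA [(m2 + m1)%MM]addmC -!addmA -scalerBl.
by congr (_ *: _); rewrite pairing_br_weight !pairingD; ring.
Qed.

Lemma rank_coef_matrix (s : seq (op K n)) N (A : 'I_N -> op K n)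
    (f : 'I_N -> {mpoly K[n]}) (w : 'I_N -> 'X_{1..n}) :
  (forall k, exists c : nat -> K,
     forall g, A k g = \sum_(i < size s) c i *: (nth id s i) g) ->
  (\rank (\matrix_(k, l) (A k (f l))@_(w l)) <= size s)%N.
Proof.
move=> A_span.
pose M := \matrix_(k, l) (A k (f l))@_(w l).
pose W := \matrix_(i < size s, l < N) (nth id s i (f l))@_(w l).
suff /mxrankS le_MW : (M <= W)%MS by exact: leq_trans le_MW (rank_leq_row W).
apply/row_subP => k; have [c Ac] := A_span k.
apply/submxP; exists (\row_i c i); apply/rowP => l.
rewrite !mxE Ac raddf_sum; apply: eq_bigr => i _.
by rewrite !mxE; apply: mcoeffZ.
Qed.

End WeightedShifts.

Section IteratedBrackets.
Variables (K : fieldType) (n : nat) (p q : 'X_{1..n}) (beta gamma : 'I_n -> K).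

Definition ad_pow (k : nat) : op K n :=
  iter k (lie_br (Delta p beta)) (Delta q gamma).

Definition ad_shift (k : nat) : 'X_{1..n} := (p *+ k + q)%MM.

Fixpoint ad_weight (k : nat) : 'I_n -> K :=
  if k is k'.+1 then br_weight beta p (ad_weight k') (ad_shift k') else gamma.

Lemma ad_shiftS k : ad_shift k.+1 = (p + ad_shift k)%MM.
Proof. by rewrite /ad_shift mulmS addmA. Qed.

Lemma lie_word_ad_pow k : lie_word (Delta p beta) (Delta q gamma) (ad_pow k).
Proof. by elim: k => [|k IHk]; [exact: lw_right | exact: lw_br (lw_left _ _) IHk]. Qed.

Lemma weighted_shift_ad_pow k : weighted_shift (ad_pow k) (ad_weight k) (ad_shift k).
Proof.
elim: k => [|k IHk]; first by rewrite /ad_shift add0m; exact: Delta_weighted_shift.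
by rewrite ad_shiftS; exact: weighted_shift_lie_br (Delta_weighted_shift _ _) IHk.
Qed.

Lemma ad_weightE k : exists b, forall j,
  ad_weight k j = (\prod_(i < k) pairing beta (ad_shift i)) * gamma j + b * beta j.
Proof.
elim: k => [|k [b IHk]]; first by exists 0 => j; rewrite big_ord0 mul1r mul0r addr0.
exists (pairing beta (ad_shift k) * b - pairing (ad_weight k) p) => j.
by rewrite big_ord_recr /= /br_weight IHk; ring.
Qed.

Hypothesis beta_gamma_indep : non_proportional beta gamma.

Lemma ad_weight_neq0 k :
  (forall i, (i < k)%N -> pairing beta (ad_shift i) != 0) ->
  exists j, ad_weight k j != 0.
Proof.
move=> shift_nz; have [b Ek] := ad_weightE k.
have prod_nz : \prod_(i < k) pairing beta (ad_shift i) != 0.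
  by apply/prodf_neq0 => i _; exact: shift_nz.
apply/existsP; apply: contraT => /existsPn weight0.
have [_ prod0] : b = 0 /\ \prod_(i < k) pairing beta (ad_shift i) = 0.
  by apply: beta_gamma_indep => j; rewrite addrC -Ek; exact/eqP/negbNE/weight0.
by rewrite prod0 eqxx in prod_nz.
Qed.

Hypothesis p_neq0 : p != 0%MM.

Lemma ad_shift_inj : injective ad_shift.
Proof.
move=> k l /(congr1 mdeg); rewrite !mdegD !mdegMn => /addIn /eqP.
by rewrite eqn_mul2l mdeg_eq0 (negbTE p_neq0) => /eqP.
Qed.

Lemma mcoeff_ad_pow_X k l j :
  (ad_pow k 'X_j)@_(U_(j) + ad_shift l) = (k == l)%:R * ad_weight k j.
Proof.
rewrite -['X_j]scale1r weighted_shift_ad_pow mcoeffZ mcoeffX mul1r pairing_mnm1.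
by rewrite eqm_add2l (inj_eq ad_shift_inj) mulrC.
Qed.

Lemma ad_shift_pairing_eq0 (s : seq (op K n)) :
  (forall A, lie_word (Delta p beta) (Delta q gamma) A -> exists c : nat -> K,
     forall f, A f = \sum_(i < size s) c i *: (nth id s i) f) ->
  exists2 r, (r <= size s)%N & pairing beta (ad_shift r) = 0.
Proof.
move=> span; set N := size s.
have [/existsP [r /eqP r0] | /existsPn shift_nz] :=
  boolP [exists r : 'I_N.+1, pairing beta (ad_shift r) == 0].
  by exists r; first exact: ltn_ord r.
have /fin_all_exists [j weight_nz] : forall k : 'I_N.+1, exists j, ad_weight k j != 0.
  move=> k; apply: ad_weight_neq0 => i lt_ik.
  exact: shift_nz (Ordinal (ltn_trans lt_ik (ltn_ord k))).
have := rank_coef_matrix (A := fun k : 'I_N.+1 => ad_pow k) (fun l => 'X_(j l))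
  (fun l => U_(j l) + ad_shift l)%MM (fun k => span _ (lie_word_ad_pow k)).
set M := \matrix_(k, l) _.
have -> : M = diag_mx (\row_k ad_weight k (j k)).
  apply/matrixP => k l; rewrite /M !mxE mcoeff_ad_pow_X mulr_natl.
  (* [mcoeff_ad_pow_X] compares [k] and [l] as naturals, [diag_mx] as ordinals. *)
  by rewrite (_ : (k == l :> nat) = (k == l)) //; case: eqVneq => [->|_].
rewrite mxrank_unit ?ltnn // unitmxE det_diag unitfE.
by apply/prodf_neq0 => k _; rewrite mxE.
Qed.

End IteratedBrackets.

Theorem lemma5 (K : fieldType) (n : nat) (hK : [pchar K] =i pred0)
  (p q : 'X_{1..n}) (hp : p != 0%MM) (hq : q != 0%MM)
  (beta gamma : 'I_n -> K) (hbg : non_proportional beta gamma) :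
  gen_lie_fin_dim (Delta p beta) (Delta q gamma) ->
  exists r : nat, pairing beta (fun i => (r * p i + q i)%N) = 0.
Proof.
move=> [s span]; have [r _ r0] := ad_shift_pairing_eq0 hbg hp span.
exists r; rewrite -r0; apply: eq_bigr => i _.
by rewrite /ad_shift mnmDE mulmnE mulnC.
Qed.
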